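(* Let $a,b$ be distinct positive real numbers and write $G=G(a,b)$, $L=L(a,b)$, $I=I(a,b)$. Then $$\frac{G\cdot I}{L}<\sqrt{I\cdot G}<L(I,G)<L,$$ $$\big(L(I,G)\big)^2<L\cdot L(I,G)<L(I^2,G^2)<L\cdot\frac{I+G}{2}.$$
   Context: For positive reals $x\neq y$: $G(x,y)=\sqrt{xy}$, logarithmic mean $L(x,y)=\frac{x-y}{\log x-\log y}$, identric mean $I(x,y)=\frac{1}{e}\left(\frac{x^x}{y^y}\right)^{1/(x-y)}$. *)

From Stdlib Require Import Reals.
Open Scope R_scope.

Definition Gm (x y : R) : R := sqrt (x * y).

Definition Lm (x y : R) : R := (x - y) / (ln x - ln y).

Definition Im (x y : R) : R :=
  / exp 1 * Rpower (Rpower x x / Rpower y y) (/ (x - y)).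

(* Write a = exp (m + t), b = exp (m - t) with t > 0.  Then G = exp m, L = exp m * sigma with
   sigma = sinh t / t, and I = exp (m + s) with s = t coth t - 1, so all six inequalities are
   homogeneous and reduce to elementary relations between s, exp s and sigma:
   exp s < sigma^2, s exp (s/2) < exp s - 1 < s sigma and 2 sigma < exp s + 1.  The middle one
   is G < L for the pair (exp s, 1); the other three are one-variable inequalities in t, each
   proved by differentiating until the sign of the derivative is evident. *)

From Stdlib Require Import Reals Lra Psatz.
From Coquelicot Require Import Coquelicot.
Open Scope R_scope.

Lemma lt_of_derive_pos (f f' : R -> R) (a b : R) : a < b ->
  (forall x, a <= x <= b -> is_derive f x (f' x)) ->
  (forall x, a < x < b -> 0 < f' x) -> f a < f b.
Proof.
  intros hab hd hp.
  destruct (MVT_cor2 f f' a b hab) as [c [hc hmvt]].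
  { intros c hc. apply is_derive_Reals, hd, hc. }
  assert (0 < f' c * (b - a)) by (apply Rmult_lt_0_compat; [apply hp|]; lra).
  lra.
Qed.

Lemma pos_of_derive_pos_from_0 (f f' : R -> R) : f 0 = 0 ->
  (forall x, 0 <= x -> is_derive f x (f' x)) ->
  (forall x, 0 < x -> 0 < f' x) -> forall x, 0 < x -> 0 < f x.
Proof.
  intros h0 hd hp x hx. rewrite <- h0.
  apply (lt_of_derive_pos f f'); [exact hx | |]; intros y hy; [apply hd | apply hp]; lra.
Qed.

Ltac grow_from_0 f' :=
  apply (pos_of_derive_pos_from_0 _ f');
  [ rewrite ?sinh_0, ?cosh_0; ring | intros ? _; auto_derive; auto; ring | ].

Lemma sinh_pos (x : R) : 0 < x -> 0 < sinh x.
Proof. intros. rewrite <- sinh_0. apply sinh_lt. lra. Qed.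

Lemma one_lt_cosh (x : R) : 0 < x -> 1 < cosh x.
Proof.
  intro hx. cut (0 < cosh x - 1); [lra|]. revert x hx.
  grow_from_0 sinh. exact sinh_pos.
Qed.

Lemma cosh_sqr_sub_sinh_sqr (x : R) : cosh x ^ 2 - sinh x ^ 2 = 1.
Proof.
  assert (exp x * exp (- x) = 1) by (rewrite <- exp_plus, Rplus_opp_r; apply exp_0).
  unfold cosh, sinh. nra.
Qed.

Lemma lt_sinh (x : R) : 0 < x -> x < sinh x.
Proof.
  intro hx. cut (0 < sinh x - x); [lra|]. revert x hx.
  grow_from_0 (fun t => cosh t - 1).
  intros y hy. generalize (one_lt_cosh y hy). lra.
Qed.

Lemma sqr_lt_2_cosh_sub_1 (x : R) : 0 < x -> x ^ 2 < 2 * (cosh x - 1).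
Proof.
  intro hx. cut (0 < 2 * (cosh x - 1) - x ^ 2); [lra|]. revert x hx.
  grow_from_0 (fun t => 2 * sinh t - 2 * t).
  intros y hy. generalize (lt_sinh y hy). lra.
Qed.

Lemma sinh_lt_mul_cosh (x : R) : 0 < x -> sinh x < x * cosh x.
Proof.
  intro hx. cut (0 < x * cosh x - sinh x); [lra|]. revert x hx.
  grow_from_0 (fun t => t * sinh t).
  intros y hy. generalize (sinh_pos y hy). nra.
Qed.

Lemma mul_cosh_sub_sinh_lt (x : R) : 0 < x -> x * cosh x - sinh x < x ^ 2 * sinh x.
Proof.
  intro hx. cut (0 < x ^ 2 * sinh x - (x * cosh x - sinh x)); [lra|]. revert x hx.
  grow_from_0 (fun t => t * sinh t + t ^ 2 * cosh t).
  intros y hy. generalize (sinh_pos y hy) (one_lt_cosh y hy). nra.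
Qed.

Lemma cosh_sub_1_lt_mul_sinh (x : R) : 0 < x -> cosh x - 1 < x * sinh x.
Proof.
  intro hx. cut (0 < x * sinh x - (cosh x - 1)); [lra|]. revert x hx.
  grow_from_0 (fun t => t * cosh t).
  intros y hy. generalize (one_lt_cosh y hy). nra.
Qed.

(* Carlson's bound L < (2 G + A) / 3 for the logarithmic mean, in hyperbolic form. *)
Lemma carlson_sinh (x : R) : 0 < x -> 3 * sinh x < 2 * x + x * cosh x.
Proof.
  intro hx. cut (0 < 2 * x + x * cosh x - 3 * sinh x); [lra|]. revert x hx.
  grow_from_0 (fun t => 2 - 2 * cosh t + t * sinh t).
  grow_from_0 (fun t => t * cosh t - sinh t).
  intros y hy. generalize (sinh_lt_mul_cosh y hy). lra.
Qed.

Lemma two_sinh_sqr_lt (x : R) : 0 < x -> 2 * sinh x ^ 2 < x * sinh x * cosh x + x ^ 2.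
Proof.
  intro hx. cut (0 < x * sinh x * cosh x - 2 * sinh x ^ 2 + x ^ 2); [lra|]. revert x hx.
  grow_from_0 (fun t => t * (cosh t ^ 2 + sinh t ^ 2) - 3 * sinh t * cosh t + 2 * t).
  grow_from_0 (fun t => 4 * t * sinh t * cosh t - 2 * (cosh t ^ 2 + sinh t ^ 2) + 2).
  grow_from_0 (fun t => 4 * t * (cosh t ^ 2 + sinh t ^ 2) - 4 * sinh t * cosh t).
  grow_from_0 (fun t => 16 * t * sinh t * cosh t).
  intros y hy. generalize (sinh_pos y hy) (one_lt_cosh y hy). intros.
  assert (0 < y * sinh y) by nra. nra.
Qed.

Lemma sqr_add_sqr_mul_cosh_lt (x : R) : 0 < x ->
  x ^ 2 + x ^ 2 * cosh x < sinh x ^ 2 + x * sinh x.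
Proof.
  intro hx. cut (0 < sinh x ^ 2 + x * sinh x - x ^ 2 - x ^ 2 * cosh x); [lra|]. revert x hx.
  grow_from_0 (fun t => 2 * sinh t * cosh t + sinh t - t * cosh t - 2 * t - t ^ 2 * sinh t).
  grow_from_0 (fun t => 2 * (cosh t ^ 2 + sinh t ^ 2) - 3 * t * sinh t - 2 - t ^ 2 * cosh t).
  grow_from_0 (fun t => 8 * sinh t * cosh t - 3 * sinh t - 5 * t * cosh t - t ^ 2 * sinh t).
  grow_from_0 (fun t => 8 * (cosh t ^ 2 + sinh t ^ 2) - 8 * cosh t - 7 * t * sinh t
                        - t ^ 2 * cosh t).
  grow_from_0 (fun t => 32 * sinh t * cosh t - 15 * sinh t - 9 * t * cosh t - t ^ 2 * sinh t).
  grow_from_0 (fun t => 32 * (cosh t ^ 2 + sinh t ^ 2) - 24 * cosh t - 11 * t * sinh t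
                        - t ^ 2 * cosh t).
  intros y hy.
  generalize (sinh_pos y hy) (one_lt_cosh y hy) (lt_sinh y hy)
    (sqr_lt_2_cosh_sub_1 y hy) (cosh_sqr_sub_sinh_sqr y). intros.
  assert (y * sinh y < sinh y * sinh y) by nra.
  assert (y ^ 2 * cosh y < 2 * (cosh y - 1) * cosh y) by nra.
  nra.
Qed.

Lemma two_mul_cosh_add_lt (x : R) : 0 < x ->
  2 * x * cosh x + x < 2 * sinh x + sinh x * cosh x.
Proof.
  intro hx. cut (0 < 2 * sinh x + sinh x * cosh x - 2 * x * cosh x - x); [lra|]. revert x hx.
  grow_from_0 (fun t => cosh t ^ 2 + sinh t ^ 2 - 2 * t * sinh t - 1).
  intros y hy. generalize (sinh_pos y hy) (lt_sinh y hy) (cosh_sqr_sub_sinh_sqr y). nra.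
Qed.
Lemma nonneg_of_ge_neg_linear (K d x : R) : 0 < K -> 0 < d ->
  (forall e, 0 < e < d -> - (K * e) <= x) -> 0 <= x.
Proof.
  intros hK hd hx. destruct (Rle_or_lt 0 x) as [h | h]; [exact h | exfalso].
  set (e := Rmin (d / 2) (- x / (2 * K))).
  assert (he1 : e <= d / 2) by apply Rmin_l.
  assert (he2 : K * e <= - x / 2).
  { replace (- x / 2) with (K * (- x / (2 * K))) by (field; lra).
    apply Rmult_le_compat_l; [lra | apply Rmin_r]. }
  assert (he0 : 0 < e) by (apply Rmin_glb_lt; [| apply Rdiv_lt_0_compat]; lra).
  specialize (hx e ltac:(lra)). lra.
Qed.

(* Replaces the anchor [f 0 = 0] for functions with a removable singularity at [0]. *)
Lemma pos_of_derive_pos_ge_neg_linear (f f' : R -> R) (K : R) : 0 < K ->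
  (forall x, 0 < x -> is_derive f x (f' x)) ->
  (forall x, 0 < x -> 0 < f' x) ->
  (forall e, 0 < e < 1 -> - (K * e) <= f e) -> forall x, 0 < x -> 0 < f x.
Proof.
  intros hK hd hp hb.
  assert (mono : forall x y, 0 < x -> x < y -> f x < f y).
  { intros x y hx hxy. apply (lt_of_derive_pos f f'); [exact hxy | |];
      intros z hz; [apply hd | apply hp]; lra. }
  intros x hx.
  assert (h : 0 <= f (x / 2)).
  { apply (nonneg_of_ge_neg_linear K (Rmin 1 (x / 2))); [exact hK | |].
    - apply Rmin_glb_lt; lra.
    - intros e [he0 he].
      assert (e < 1) by (eapply Rlt_le_trans; [exact he | apply Rmin_l]).
      assert (e < x / 2) by (eapply Rlt_le_trans; [exact he | apply Rmin_r]).
      specialize (hb e ltac:(lra)). specialize (mono e (x / 2) he0 ltac:(lra)). lra. }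
  specialize (mono (x / 2) x ltac:(lra) ltac:(lra)). lra.
Qed.

Lemma ln_ge_0 (x : R) : 1 <= x -> 0 <= ln x.
Proof.
  intro hx. rewrite <- ln_1. destruct (Req_dec x 1) as [-> | hne]; [lra |].
  left. apply ln_increasing; lra.
Qed.

Lemma ln_le_sub_1 (x : R) : 0 < x -> ln x <= x - 1.
Proof. intro hx. generalize (exp_ineq1_le (ln x)). rewrite exp_ln; lra. Qed.

Lemma sinh_div_gt_1 (t : R) : 0 < t -> 1 < sinh t / t.
Proof.
  intro ht. apply (Rmult_lt_reg_r t); [exact ht |].
  unfold Rdiv. rewrite Rmult_assoc, Rinv_l, Rmult_1_r, Rmult_1_l; [apply lt_sinh |]; lra.
Qed.

Lemma sinh_div_lt_cosh (t : R) : 0 < t -> sinh t / t < cosh t.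
Proof.
  intro ht. apply (Rmult_lt_reg_r t); [exact ht |].
  unfold Rdiv. rewrite Rmult_assoc, Rinv_l, Rmult_1_r, Rmult_comm; [apply sinh_lt_mul_cosh |]; lra.
Qed.

(* [ln (I / G)] when [a = exp (m + t)] and [b = exp (m - t)]. *)
Definition log_identric_ratio (t : R) : R := t * cosh t / sinh t - 1.

Lemma log_identric_ratio_pos (t : R) : 0 < t -> 0 < log_identric_ratio t.
Proof.
  intro ht. generalize (sinh_pos t ht) (sinh_lt_mul_cosh t ht). intros.
  unfold log_identric_ratio. cut (1 < t * cosh t / sinh t); [lra |].
  apply (Rmult_lt_reg_r (sinh t)); [assumption |].
  unfold Rdiv. rewrite Rmult_assoc, Rinv_l; lra.
Qed.

Lemma log_identric_ratio_le (t : R) : 0 < t < 1 -> log_identric_ratio t <= t.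
Proof.
  intro ht. generalize (sinh_pos t ltac:(lra)) (mul_cosh_sub_sinh_lt t ltac:(lra)). intros.
  assert (t * cosh t / sinh t < t ^ 2 + 1).
  { apply (Rmult_lt_reg_r (sinh t)); [assumption |].
    unfold Rdiv. rewrite Rmult_assoc, Rinv_l; lra. }
  unfold log_identric_ratio. nra.
Qed.

(* The derivatives are written so that they agree with [auto_derive]'s output up to
   [field], i.e. without using [cosh t ^ 2 - sinh t ^ 2 = 1]. *)
Lemma log_identric_ratio_lt_2_ln (t : R) : 0 < t ->
  log_identric_ratio t < 2 * ln (sinh t / t).
Proof.
  intro ht. cut (0 < 2 * ln (sinh t / t) - log_identric_ratio t); [lra |]. revert t ht.
  apply (pos_of_derive_pos_ge_neg_linear _
    (fun t => (t * sinh t * cosh t - 2 * sinh t ^ 2 + t ^ 2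
               + t ^ 2 * (cosh t ^ 2 - sinh t ^ 2 - 1)) / (t * sinh t ^ 2)) 1); [lra | | |].
  - intros y hy. generalize (sinh_pos y hy). intro.
    unfold log_identric_ratio. auto_derive.
    + repeat split; try lra. apply Rdiv_lt_0_compat; lra.
    + field. lra.
  - intros y hy. generalize (sinh_pos y hy) (two_sinh_sqr_lt y hy). intros.
    rewrite cosh_sqr_sub_sinh_sqr, Rminus_diag, Rmult_0_r, Rplus_0_r.
    apply Rdiv_lt_0_compat; [lra | apply Rmult_lt_0_compat; [lra | apply pow_lt; lra]].
  - intros e he. generalize (log_identric_ratio_le e he)
      (ln_ge_0 (sinh e / e) ltac:(left; apply sinh_div_gt_1; lra)). lra.
Qed.

Lemma log_identric_ratio_lt_ln (t : R) : 0 < t ->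
  log_identric_ratio t < ln (1 + cosh t - sinh t / t).
Proof.
  intro ht. cut (0 < ln (1 + cosh t - sinh t / t) - log_identric_ratio t); [lra |].
  revert t ht.
  apply (pos_of_derive_pos_ge_neg_linear _
    (fun t => ((sinh t - t) * (sinh t ^ 2 + t * sinh t - t ^ 2 - t ^ 2 * cosh t)
               + t ^ 2 * (t + t * cosh t - 2 * sinh t) * (cosh t ^ 2 - sinh t ^ 2 - 1))
              / (t * (t + t * cosh t - sinh t) * sinh t ^ 2)) 1); [lra | | |].
  - intros y hy. generalize (sinh_pos y hy) (sinh_div_lt_cosh y hy) (sinh_lt_mul_cosh y hy).
    intros. unfold log_identric_ratio. auto_derive.
    + repeat split; lra.
    + field. repeat split; lra.
  - intros y hy. generalize (sinh_pos y hy) (sqr_add_sqr_mul_cosh_lt y hy) (lt_sinh y hy)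
      (sinh_lt_mul_cosh y hy). intros.
    rewrite cosh_sqr_sub_sinh_sqr. apply Rdiv_lt_0_compat; [nra |].
    apply Rmult_lt_0_compat; nra.
  - intros e he. generalize (log_identric_ratio_le e he) (sinh_div_lt_cosh e ltac:(lra)). intros.
    assert (0 <= ln (1 + cosh e - sinh e / e)) by (apply ln_ge_0; lra). lra.
Qed.

Lemma ln_lt_log_identric_ratio (t : R) : 0 < t ->
  ln ((2 * cosh t + 1) / 3) < log_identric_ratio t.
Proof.
  intro ht. cut (0 < log_identric_ratio t - ln ((2 * cosh t + 1) / 3)); [lra |].
  revert t ht.
  apply (pos_of_derive_pos_ge_neg_linear _
    (fun t => (2 * sinh t + sinh t * cosh t - 2 * t * cosh t - t
               + (2 * sinh t - t * (2 * cosh t + 1)) * (cosh t ^ 2 - sinh t ^ 2 - 1))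
              / (sinh t ^ 2 * (2 * cosh t + 1))) 1); [lra | | |].
  - intros y hy. generalize (sinh_pos y hy) (one_lt_cosh y hy). intros.
    unfold log_identric_ratio. auto_derive.
    + repeat split; lra.
    + field. repeat split; lra.
  - intros y hy. generalize (sinh_pos y hy) (two_mul_cosh_add_lt y hy) (one_lt_cosh y hy).
    intros. rewrite cosh_sqr_sub_sinh_sqr. apply Rdiv_lt_0_compat; [lra |].
    apply Rmult_lt_0_compat; nra.
  - intros e he. generalize (log_identric_ratio_pos e ltac:(lra))
      (cosh_sub_1_lt_mul_sinh e ltac:(lra)) (one_lt_cosh e ltac:(lra))
      (ln_le_sub_1 ((2 * cosh e + 1) / 3) ltac:(generalize (one_lt_cosh e ltac:(lra)); lra)).
    intros.
    assert (sinh e <= 3 / 2).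
    { assert (exp e <= exp 1) by (left; apply exp_increasing; lra).
      generalize exp_le_3 (exp_pos (- e)). unfold sinh. lra. }
    nra.
Qed.

Lemma exp_log_identric_ratio_lt_sqr (t : R) : 0 < t ->
  exp (log_identric_ratio t) < (sinh t / t) ^ 2.
Proof.
  intro ht. generalize (sinh_div_gt_1 t ht). intro.
  replace ((sinh t / t) ^ 2) with (exp (2 * ln (sinh t / t))).
  - apply exp_increasing, log_identric_ratio_lt_2_ln, ht.
  - rewrite <- (exp_ln (sinh t / t)) at 2; [| lra].
    replace (2 * ln (sinh t / t)) with (ln (sinh t / t) + ln (sinh t / t)) by ring.
    rewrite exp_plus. ring.
Qed.

Lemma exp_log_identric_ratio_sub_1_lt (t : R) : 0 < t ->
  exp (log_identric_ratio t) - 1 < log_identric_ratio t * (sinh t / t).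
Proof.
  intro ht. generalize (sinh_pos t ht) (sinh_div_lt_cosh t ht). intros.
  assert (exp (log_identric_ratio t) < 1 + cosh t - sinh t / t).
  { rewrite <- (exp_ln (1 + cosh t - sinh t / t)); [| lra].
    apply exp_increasing, log_identric_ratio_lt_ln, ht. }
  replace (log_identric_ratio t * (sinh t / t)) with (cosh t - sinh t / t)
    by (unfold log_identric_ratio; field; lra).
  lra.
Qed.

Lemma two_sinh_div_lt_exp_log_identric_ratio (t : R) : 0 < t ->
  2 * (sinh t / t) < exp (log_identric_ratio t) + 1.
Proof.
  intro ht. generalize (one_lt_cosh t ht) (carlson_sinh t ht). intros.
  assert ((2 * cosh t + 1) / 3 < exp (log_identric_ratio t)).
  { rewrite <- (exp_ln ((2 * cosh t + 1) / 3)); [| lra].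
    apply exp_increasing, ln_lt_log_identric_ratio, ht. }
  assert (3 * (sinh t / t) < 2 + cosh t).
  { apply (Rmult_lt_reg_r t); [exact ht |].
    replace (3 * (sinh t / t) * t) with (3 * sinh t) by (field; lra). lra. }
  lra.
Qed.

Lemma exp_pow (x : R) (n : nat) : exp x ^ n = exp (INR n * x).
Proof.
  induction n as [| n IH]; simpl pow.
  - rewrite Rmult_0_l, exp_0. reflexivity.
  - rewrite IH, <- exp_plus, S_INR. f_equal. ring.
Qed.

Lemma Gm_exp (x y : R) : Gm (exp x) (exp y) = exp ((x + y) / 2).
Proof.
  unfold Gm. rewrite <- exp_plus.
  replace (x + y) with ((x + y) / 2 + (x + y) / 2) at 1 by field.
  rewrite exp_plus. apply sqrt_square. left. apply exp_pos.
Qed.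

Lemma Lm_exp (x y : R) : Lm (exp x) (exp y) = (exp x - exp y) / (x - y).
Proof. unfold Lm. rewrite !ln_exp. reflexivity. Qed.

Lemma Im_exp (x y : R) : x <> y ->
  Im (exp x) (exp y) = exp ((x * exp x - y * exp y) / (exp x - exp y) - 1).
Proof.
  intro hxy.
  assert (exp x <> exp y) by (intro h; apply hxy, exp_inv, h).
  unfold Im, Rpower. rewrite !ln_exp, ln_div, !ln_exp by apply exp_pos.
  rewrite <- exp_Ropp, <- exp_plus. f_equal. field. lra.
Qed.

Lemma mul_exp_half_lt_exp_sub_1 (s : R) : 0 < s -> s * exp (s / 2) < exp s - 1.
Proof.
  intro hs. generalize (lt_sinh (s / 2) ltac:(lra)). unfold sinh. intro h.
  assert (exp (s / 2) * exp (- (s / 2)) = 1)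
    by (rewrite <- exp_plus, Rplus_opp_r; apply exp_0).
  assert (exp (s / 2) * exp (s / 2) = exp s)
    by (rewrite <- exp_plus; f_equal; field).
  generalize (exp_pos (s / 2)). nra.
Qed.

(* [g = G], [r * r = I / G] and [sg = L / G]. *)
Lemma means_chain_algebra (g r s sg : R) : 0 < g -> 0 < s -> 0 < r -> r < sg ->
  s * r < r * r - 1 -> r * r - 1 < s * sg -> 2 * sg < r * r + 1 ->
  let I := g * (r * r) in
  (g * I / (g * sg) < g * r /\ g * r < (I - g) / s /\ (I - g) / s < g * sg) /\
  (((I - g) / s) ^ 2 < g * sg * ((I - g) / s) /\
   g * sg * ((I - g) / s) < (I ^ 2 - g ^ 2) / (2 * s) /\
   (I ^ 2 - g ^ 2) / (2 * s) < g * sg * ((I + g) / 2)).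
Proof.
  intros hg hs hr hrs h1 h2 h3 I. unfold I.
  assert (hgr : 0 < g * r) by nra.
  assert (hr1 : 0 < r * r - 1) by nra.
  assert (hgg : 0 < g * g) by nra.
  assert (hLIG : g * r < (g * (r * r) - g) / s).
  { apply Rlt_0_minus.
    replace ((g * (r * r) - g) / s - g * r) with (g * (r * r - 1 - s * r) / s) by (field; lra).
    apply Rdiv_lt_0_compat; nra. }
  assert (hLIG' : (g * (r * r) - g) / s < g * sg).
  { apply Rlt_0_minus.
    replace (g * sg - (g * (r * r) - g) / s) with (g * (s * sg - (r * r - 1)) / s) by (field; lra).
    apply Rdiv_lt_0_compat; nra. }
  split; [split; [| split] | split; [| split]]; try assumption.
  - apply Rlt_0_minus.
    replace (g * r - g * (g * (r * r)) / (g * sg)) with (g * r * (sg - r) / sg) by (field; lra).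
    apply Rdiv_lt_0_compat; nra.
  - set (mu := (g * (r * r) - g) / s) in *. nra.
  - apply Rlt_0_minus.
    replace ((g * (r * r)) ^ 2 - g ^ 2) with (g * g * (r * r - 1) * (r * r + 1)) by ring.
    replace (g * g * (r * r - 1) * (r * r + 1) / (2 * s) - g * sg * ((g * (r * r) - g) / s))
      with (g * g * (r * r - 1) * (r * r + 1 - 2 * sg) / (2 * s)) by (field; lra).
    apply Rdiv_lt_0_compat; [apply Rmult_lt_0_compat; [apply Rmult_lt_0_compat |] |]; lra.
  - apply Rlt_0_minus.
    replace ((g * (r * r)) ^ 2 - g ^ 2) with (g * g * (r * r - 1) * (r * r + 1)) by ring.
    replace (g * sg * ((g * (r * r) + g) / 2) - g * g * (r * r - 1) * (r * r + 1) / (2 * s))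
      with (g * g * (r * r + 1) * (s * sg - (r * r - 1)) / (2 * s)) by (field; lra).
    apply Rdiv_lt_0_compat; [apply Rmult_lt_0_compat; [apply Rmult_lt_0_compat |] |]; lra.
Qed.

Lemma means_chain_exp (m s sg : R) : 0 < s -> 0 < sg ->
  exp s < sg ^ 2 -> exp s - 1 < s * sg -> 2 * sg < exp s + 1 ->
  let G := exp m in
  let L := exp m * sg in
  let I := exp (m + s) in
  (G * I / L < sqrt (I * G) /\ sqrt (I * G) < Lm I G /\ Lm I G < L) /\
  (Lm I G ^ 2 < L * Lm I G /\ L * Lm I G < Lm (I ^ 2) (G ^ 2) /\
   Lm (I ^ 2) (G ^ 2) < L * ((I + G) / 2)).
Proof.
  intros hs hsg hA hW hS. cbv zeta.
  set (g := exp m). set (r := exp (s / 2)).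
  assert (hrr : r * r = exp s) by (unfold r; rewrite <- exp_plus; f_equal; field).
  assert (hI : exp (m + s) = g * (r * r)) by (rewrite hrr; apply exp_plus).
  assert (hsqrt : sqrt (exp (m + s) * g) = g * r).
  { change (Gm (exp (m + s)) (exp m) = exp m * exp (s / 2)).
    rewrite Gm_exp, <- exp_plus. f_equal. field. }
  assert (hLIG : Lm (exp (m + s)) g = (exp (m + s) - g) / s).
  { unfold g. rewrite Lm_exp. f_equal. ring. }
  assert (hLIG2 : Lm (exp (m + s) ^ 2) (g ^ 2) = ((exp (m + s)) ^ 2 - g ^ 2) / (2 * s)).
  { unfold g. rewrite !exp_pow, Lm_exp. f_equal. simpl INR. ring. }
  rewrite hsqrt, hLIG, hLIG2, hI.
  assert (hr : 0 < r) by apply exp_pos.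
  apply means_chain_algebra; try assumption.
  - apply exp_pos.
  - rewrite hrr in *. nra.
  - rewrite hrr. apply mul_exp_half_lt_exp_sub_1, hs.
  - rewrite hrr. exact hW.
  - rewrite hrr. exact hS.
Qed.

Lemma Gm_exp_add_sub (m t : R) : Gm (exp (m + t)) (exp (m - t)) = exp m.
Proof. rewrite Gm_exp. f_equal. field. Qed.

Lemma Lm_exp_add_sub (m t : R) : t <> 0 ->
  Lm (exp (m + t)) (exp (m - t)) = exp m * (sinh t / t).
Proof.
  intro ht. rewrite Lm_exp. replace (m - t) with (m + - t) by ring. rewrite !exp_plus.
  unfold sinh. field. lra.
Qed.

Lemma Im_exp_add_sub (m t : R) : 0 < t ->
  Im (exp (m + t)) (exp (m - t)) = exp (m + log_identric_ratio t).
Proof.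
  intro ht. generalize (sinh_pos t ht) (exp_pos m). unfold sinh. intros.
  rewrite Im_exp by lra. f_equal.
  replace (m - t) with (m + - t) by ring. rewrite !exp_plus.
  unfold log_identric_ratio, sinh, cosh. field. nra.
Qed.

Lemma corollary1_lt (a b : R) : 0 < b -> b < a ->
  let G := Gm a b in
  let L := Lm a b in
  let I := Im a b in
  (G * I / L < sqrt (I * G) /\ sqrt (I * G) < Lm I G /\ Lm I G < L) /\
  (Lm I G ^ 2 < L * Lm I G /\ L * Lm I G < Lm (I ^ 2) (G ^ 2) /\
   Lm (I ^ 2) (G ^ 2) < L * ((I + G) / 2)).
Proof.
  intros hb hba.
  assert (hln : ln b < ln a) by (apply ln_increasing; lra).
  set (m := (ln a + ln b) / 2). set (t := (ln a - ln b) / 2).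
  assert (ht : 0 < t) by (unfold t; lra).
  assert (ea : a = exp (m + t)) by (rewrite <- (exp_ln a) at 1 by lra; f_equal; unfold m, t; field).
  assert (eb : b = exp (m - t)) by (rewrite <- (exp_ln b) at 1 by lra; f_equal; unfold m, t; field).
  rewrite ea, eb, Gm_exp_add_sub, Lm_exp_add_sub, Im_exp_add_sub by lra.
  apply means_chain_exp.
  - apply log_identric_ratio_pos, ht.
  - generalize (sinh_div_gt_1 t ht). lra.
  - apply exp_log_identric_ratio_lt_sqr, ht.
  - apply exp_log_identric_ratio_sub_1_lt, ht.
  - apply two_sinh_div_lt_exp_log_identric_ratio, ht.
Qed.

Lemma Gm_comm (x y : R) : Gm x y = Gm y x.
Proof. unfold Gm. rewrite Rmult_comm. reflexivity. Qed.

Lemma Lm_comm (x y : R) : Lm x y = Lm y x.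
Proof.
  unfold Lm. destruct (Req_dec (ln x) (ln y)) as [h | h].
  - rewrite h, !Rminus_diag. unfold Rdiv. rewrite Rinv_0, !Rmult_0_r. reflexivity.
  - field. split; lra.
Qed.

Lemma Im_comm (x y : R) : x <> y -> Im x y = Im y x.
Proof.
  intro hxy. unfold Im, Rpower. rewrite !ln_div, !ln_exp by apply exp_pos.
  f_equal. f_equal. field. split; lra.
Qed.

Theorem corollary1 (a b : R) (ha : 0 < a) (hb : 0 < b) (hab : a <> b) :
  let G := Gm a b in
  let L := Lm a b in
  let I := Im a b in
  (G * I / L < sqrt (I * G) /\ sqrt (I * G) < Lm I G /\ Lm I G < L) /\
  (Lm I G ^ 2 < L * Lm I G /\ L * Lm I G < Lm (I ^ 2) (G ^ 2) /\
   Lm (I ^ 2) (G ^ 2) < L * ((I + G) / 2)).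
Proof.
  destruct (Rlt_or_le b a) as [hba | hab'].
  - apply corollary1_lt; assumption.
  - rewrite (Gm_comm a b), (Lm_comm a b), (Im_comm a b) by exact hab.
    apply corollary1_lt; lra.
Qed.
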